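(* Let $\Sigma$ be a finite alphabet. If $L \subseteq \Sigma^*$ has growth $g(n)$, then $F_L(n) \in \mathcal{O}(\log g(n) + \log n)$.
   Context: The growth of $L$ is $g(n)=|\{x\in L : |x|\le n\}|$. $\log x=\lfloor\log_2 x\rfloor$. Fixed-size sliding window model: fix $a\in\Sigma$; $\mathrm{last}_n(a_1\cdots a_m)=a_{m-n+1}\cdots a_m$ if $n\le m$, else $a^{n-m}a_1\cdots a_m$. A fixed-size sliding window algorithm for $L$ is a sequence $(\mathcal{A}_n)_{n\ge0}$ of deterministic (possibly infinite-state) automata with injective encodings of their states into bit strings, $\mathcal{A}_n$ accepting $\{w:\mathrm{last}_n(w)\in L\}$; its space complexity at $n$ is the maximal encoding length of a state of $\mathcal{A}_n$. $F_L(n)$ is the minimal space complexity at $n$ over all such algorithms. *)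

From mathcomp Require Import all_boot.
Set Implicit Arguments. Unset Strict Implicit. Unset Printing Implicit Defensive.

(* log x = floor(log2 x); we use trunc_log 2 (with trunc_log 2 0 = 0). *)
Definition log2 (x : nat) : nat := trunc_log 2 x.

Definition growth (Sigma : finType) (L : pred (seq Sigma)) (n : nat) : nat :=
  \sum_(k < n.+1) #|[set t : k.-tuple Sigma | L (tval t)]|.

Definition last_n (Sigma : Type) (a : Sigma) (n : nat) (w : seq Sigma) : seq Sigma :=
  if n <= size w then drop (size w - n) w else nseq (n - size w) a ++ w.

(* Deterministic, possibly infinite-state automaton together with an
   injective encoding of its states into bit strings. *)
Record enc_dfa (Sigma : Type) := EncDFA {
  st : Type;
  init : st;
  delta : st -> Sigma -> st;
  final : st -> bool;
  enc : st -> seq bool;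
  enc_inj : injective enc
}.
Arguments st {Sigma} A : rename.
Arguments init {Sigma} A : rename.
Arguments delta {Sigma} A _ _ : rename.
Arguments final {Sigma} A _ : rename.
Arguments enc {Sigma} A _ : rename.

Definition dfa_accepts (Sigma : Type) (A : enc_dfa Sigma) (w : seq Sigma) : bool :=
  final A (foldl (delta A) (init A) w).

Definition space_le (Sigma : Type) (A : enc_dfa Sigma) (s : nat) : Prop :=
  forall q : st A, size (enc A q) <= s.

Definition sw_automaton (Sigma : Type) (a : Sigma) (L : pred (seq Sigma))
    (n : nat) (A : enc_dfa Sigma) : Prop :=
  forall w : seq Sigma, dfa_accepts A w = L (last_n a n w).

(* F_L(n) <= s, i.e. (F_L(n) being a minimum over natural numbers) some
   sliding window automaton A_n for L has space complexity at most s. *)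
Definition F_le (Sigma : Type) (a : Sigma) (L : pred (seq Sigma)) (n s : nat) : Prop :=
  exists A : enc_dfa Sigma, sw_automaton a L n A /\ space_le A s.

From mathcomp Require Import all_boot.
From mathcomp Require Import zify.

Set Implicit Arguments. Unset Strict Implicit. Unset Printing Implicit Defensive.

(* The automaton for window size n remembers the longest suffix of the padded
   input that is a prefix of some word of L of length exactly n (as in the
   Knuth-Morris-Pratt construction). The last n letters are in L exactly when
   this suffix has length n and lies in L. A state is determined by its length
   (at most n) and by the position, in a list of the at most g(n) accepted
   windows, of a window it is a prefix of; so it fits in
   (log n + 1) + (log g(n) + 1) bits. *)

Fixpoint bits_of (w k : nat) : seq bool :=
  if w is w'.+1 then odd k :: bits_of w' k./2 else [::].

Definition nat_of_bits (bs : seq bool) : nat :=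
  foldr (fun (b : bool) k => b + k.*2) 0 bs.

Lemma size_bits_of w k : size (bits_of w k) = w.
Proof. by elim: w k => //= w IH k; rewrite IH. Qed.

Lemma bits_ofK w k : k < 2 ^ w -> nat_of_bits (bits_of w k) = k.
Proof.
elim: w k => [|w IH] k /=; first by rewrite expn0 ltnS leqn0 => /eqP->.
by rewrite expnS mul2n -ltn_half_double => /IH ->; rewrite odd_double_half.
Qed.

Lemma last_nE (T : Type) (a : T) n w :
  last_n a n w = drop (size w) (nseq n a ++ w).
Proof.
rewrite /last_n drop_cat size_nseq ltnNge.
by case: ifP => // _; rewrite drop_nseq.
Qed.

Section LongestSuffix.

Variables (T : Type) (P : pred (seq T)).
Hypothesis P_nil : P [::].

Fixpoint longest_suffix (x : seq T) : seq T :=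
  if P x then x else if x is _ :: x' then longest_suffix x' else [::].

Definition min_drop (x : seq T) (k : nat) : Prop :=
  P (drop k x) /\ forall j, j < k -> ~~ P (drop j x).

Lemma min_drop_exists x : exists k, min_drop x k.
Proof.
have P_drop_size : exists k, P (drop k x) by exists (size x); rewrite drop_size.
case: (ex_minnP P_drop_size) => k Pk k_min; exists k; split=> // j.
by apply: contraTN => /k_min; rewrite leqNgt.
Qed.

Lemma longest_suffixE x k : min_drop x k -> longest_suffix x = drop k x.
Proof.
elim: x k => [|b x IH] k [Pk k_min] /=; first by case: ifP.
case: k Pk k_min => [|k] Pk k_min; first by rewrite Pk.
have /negbTE -> := k_min 0 isT; apply: IH; split=> // j j_lt.
exact: (k_min j.+1).
Qed.

Lemma longest_suffix_in x : P (longest_suffix x).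
Proof. by have [k kx] := min_drop_exists x; rewrite (longest_suffixE kx); case: kx. Qed.

Lemma longest_suffix_id x : P x -> longest_suffix x = x.
Proof. by case: x => [|b x] /= ->. Qed.

Lemma size_longest_suffix x : (size (longest_suffix x) == size x) = P x.
Proof.
have [[|k] kx] := min_drop_exists x; rewrite (longest_suffixE kx).
  by case: kx; rewrite !drop0 eqxx => ->.
case: x kx => [[_ /(_ 0 isT)]|b x kx]; first by rewrite P_nil.
have /negbTE := kx.2 0 isT; rewrite drop0 => ->; rewrite size_drop /=; lia.
Qed.

Section Bounded.

Variable n : nat.
Hypothesis size_P : forall s, P s -> size s <= n.

Lemma longest_suffix_drop z m :
  m <= size z - n -> longest_suffix (drop m z) = longest_suffix z.
Proof.
move=> m_le; have [k [Pk k_min]] := min_drop_exists z.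
have m_k : m <= k by have := size_P Pk; rewrite size_drop; lia.
rewrite (longest_suffixE (conj Pk k_min)) -[k](subnK m_k) -drop_drop.
apply: longest_suffixE; split=> [|j j_lt]; rewrite drop_drop ?subnK //.
by apply: k_min; lia.
Qed.

End Bounded.

Section PrefixClosed.

Hypothesis P_rcons : forall y c, P (rcons y c) -> P y.

Lemma longest_suffix_rcons x c :
  longest_suffix (rcons x c) = longest_suffix (rcons (longest_suffix x) c).
Proof.
have [k [Pk k_min]] := min_drop_exists x.
have k_le : k <= size x.
  by rewrite leqNgt; apply/negP => /k_min; rewrite drop_size P_nil.
rewrite (@longest_suffixE x k) // -drop_rcons //.
have [m [Pm m_min]] := min_drop_exists (drop k (rcons x c)).
rewrite (longest_suffixE (conj Pm m_min)) drop_drop; apply: longest_suffixE.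
split=> [|j j_lt]; first by rewrite -drop_drop.
have [j_k | k_j] := ltnP j k.
  rewrite drop_rcons; last by lia.
  by apply: contraNN (k_min j j_k); apply: P_rcons.
by rewrite -(subnK k_j) -drop_drop; apply: m_min; lia.
Qed.

Lemma longest_suffix_cat x w :
  longest_suffix (x ++ w) = longest_suffix (longest_suffix x ++ w).
Proof.
elim: w x => [|c w IH] x; first by rewrite !cats0 [RHS]longest_suffix_id ?longest_suffix_in.
by rewrite -!cat_rcons IH longest_suffix_rcons -IH.
Qed.

End PrefixClosed.

End LongestSuffix.

Section SuffixAutomaton.

Variables (T : Type) (P : pred (seq T)).
Hypotheses (P_nil : P [::]) (P_rcons : forall y c, P (rcons y c) -> P y).
Variables (start : seq T) (final : pred (seq T)) (code : seq T -> seq bool).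
Hypothesis code_inj : {in P &, injective code}.

Definition suffix_state := {s : seq T | P s}.

Definition suffix_state_of (x : seq T) : suffix_state :=
  exist _ (longest_suffix P x) (longest_suffix_in P_nil x).

Definition suffix_step (q : suffix_state) (c : T) : suffix_state :=
  suffix_state_of (rcons (val q) c).

Lemma suffix_code_inj : injective (fun q : suffix_state => code (val q)).
Proof. by move=> [s Ps] [t Pt] /= /code_inj e; apply: val_inj; apply: e. Qed.

Definition suffix_dfa : enc_dfa T :=
  @EncDFA T suffix_state (suffix_state_of start) suffix_step
    (fun q => final (val q)) _ suffix_code_inj.

Lemma val_foldl_suffix_step q w :
  val (foldl suffix_step q w) = longest_suffix P (val q ++ w).
Proof.
elim: w q => [|c w IH] [s Ps] /=; first by rewrite cats0 longest_suffix_id.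
by rewrite IH /= -longest_suffix_cat // cat_rcons.
Qed.

Lemma suffix_dfa_accepts w :
  dfa_accepts suffix_dfa w = final (longest_suffix P (start ++ w)).
Proof.
by rewrite /dfa_accepts /= val_foldl_suffix_step /= -longest_suffix_cat.
Qed.

End SuffixAutomaton.

Section PrefixCode.

Variables (T : eqType) (W : seq (seq T)).

Definition prefix_of (s : seq T) : bool := has (prefix s) W.

Lemma prefix_of_rcons s c : prefix_of (rcons s c) -> prefix_of s.
Proof. by apply: sub_has => w; apply: prefix_trans (prefix_rcons s c). Qed.

Lemma size_prefix_of n s :
  {in W, forall w, size w <= n} -> prefix_of s -> size s <= n.
Proof.
by move=> W_le /hasP [w /W_le w_le /size_prefix s_le]; apply: leq_trans w_le.
Qed.

Variables (b1 b2 : nat).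

Definition prefix_code (s : seq T) : seq bool :=
  bits_of b1 (size s) ++ bits_of b2 (find (prefix s) W).

Lemma size_prefix_code s : size (prefix_code s) = b1 + b2.
Proof. by rewrite size_cat !size_bits_of. Qed.

Definition prefix_decode (bs : seq bool) : seq T :=
  take (nat_of_bits (take b1 bs)) (nth [::] W (nat_of_bits (drop b1 bs))).

Lemma prefix_codeK :
  {in W, forall w, size w < 2 ^ b1} -> size W <= 2 ^ b2 ->
  {in prefix_of, cancel prefix_code prefix_decode}.
Proof.
move=> W_lt W_le s; rewrite unfold_in => Ps.
have s_lt : size s < 2 ^ b1.
  by case/hasP: Ps => w /W_lt w_lt /size_prefix s_le; apply: leq_ltn_trans w_lt.
have find_lt : find (prefix s) W < 2 ^ b2 by rewrite /prefix_of has_find in Ps; lia.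
rewrite /prefix_decode take_size_cat ?drop_size_cat ?size_bits_of // !bits_ofK //.
by apply/eqP; rewrite -prefixE; apply: nth_find.
Qed.

End PrefixCode.

Section SlidingWindow.

Variables (Sigma : finType) (a : Sigma) (L : pred (seq Sigma)) (n : nat).

Definition accepted_windows : seq (seq Sigma) :=
  map val (enum [set t : n.-tuple Sigma | L t]).

(* The empty word is added so that it is a state even if no window is accepted. *)
Definition window_dict : seq (seq Sigma) := [::] :: accepted_windows.

Definition window_prefix : pred (seq Sigma) := prefix_of window_dict.

Lemma size_accepted_windows : size accepted_windows <= growth L n.
Proof. by rewrite size_map -cardE /growth big_ord_recr leq_addl. Qed.

Lemma size_in_window_dict w : w \in window_dict -> size w <= n.
Proof. by rewrite inE => /predU1P [-> // | /mapP [t _ ->]]; rewrite size_tuple. Qed.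

Lemma size_window_prefix s : window_prefix s -> size s <= n.
Proof. exact: size_prefix_of size_in_window_dict. Qed.

Lemma window_prefix_accepted y : size y = n -> L y -> window_prefix y.
Proof.
move=> /eqP y_n Ly; apply/hasP; exists y; last exact: prefix_refl.
rewrite inE; apply/predU1P; right; apply/mapP.
by exists (Tuple y_n); rewrite ?mem_enum ?inE.
Qed.

Definition window_final (s : seq Sigma) : bool := (size s == n) && L s.

Lemma window_final_longest_suffix y :
  size y = n -> window_final (longest_suffix window_prefix y) = L y.
Proof.
move=> y_n; rewrite /window_final -{1}y_n size_longest_suffix //.
case Py: (window_prefix y); first by rewrite longest_suffix_id.
by apply/esym/negbTE; apply: contraFN Py; apply: window_prefix_accepted.
Qed.

Definition window_code : seq Sigma -> seq bool :=
  prefix_code window_dict (log2 n).+1 (log2 (growth L n)).+1.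

Lemma window_code_inj : {in window_prefix &, injective window_code}.
Proof.
apply: can_in_inj (prefix_codeK _ _) => [w /size_in_window_dict w_le|].
  exact: leq_ltn_trans w_le (trunc_log_ltn _ _).
exact: leq_ltn_trans size_accepted_windows (trunc_log_ltn _ _).
Qed.

Definition sliding_window_dfa : enc_dfa Sigma :=
  suffix_dfa (isT : window_prefix [::]) (nseq n a) window_final window_code_inj.

Lemma sliding_window_dfa_correct : sw_automaton a L n sliding_window_dfa.
Proof.
move=> w; rewrite suffix_dfa_accepts; last exact: prefix_of_rcons.
rewrite -(@longest_suffix_drop _ _ isT _ size_window_prefix _ (size w)); last first.
  by rewrite size_cat size_nseq addKn.
rewrite -last_nE window_final_longest_suffix //.
by rewrite last_nE size_drop size_cat size_nseq addnK.
Qed.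

Lemma sliding_window_dfa_space :
  space_le sliding_window_dfa ((log2 n).+1 + (log2 (growth L n)).+1).
Proof. by move=> q; apply: eq_leq; apply: size_prefix_code. Qed.

End SlidingWindow.

Theorem theorem4p3 (Sigma : finType) (a : Sigma) (L : pred (seq Sigma)) :
  exists c N : nat, forall n : nat, N <= n ->
    F_le a L n (c * (log2 (growth L n) + log2 n)).
Proof.
exists 3, 2 => n n_ge2; exists (sliding_window_dfa a L n).
split=> [|q]; first exact: sliding_window_dfa_correct.
have log2_ge1 : 1 <= log2 n by apply: trunc_log_max.
have := sliding_window_dfa_space q; lia.
Qed.
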